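(* Let $r=r(n)\ge3$ be an integer with $r=o(n^{1/2})$, and let $m=m(n)$ be a nonnegative integer. Let $t$ and $\alpha$ be integers with $t=O(1)$ and $0\le\alpha\le rt$. If $H$ is chosen uniformly at random from $\mathcal{H}_r(n,m)$, then the expected number of sets of $t$ edges of $H$ whose union has at most $rt-\alpha$ vertices is $O\bigl(t^\alpha r^{2\alpha}m^tn^{-\alpha}\bigr)$ as $n\to\infty$.
   Context: $\mathcal{H}_r(n,m)$ is the set of all $r$-uniform hypergraphs on vertex set $[n]$ with exactly $m$ edges (each edge an $r$-subset of $[n]$). *)

From HB Require Import structures.
From mathcomp Require Import all_boot all_order all_algebra.
Set Implicit Arguments. Unset Strict Implicit. Unset Printing Implicit Defensive.
Import Order.TTheory GRing.Theory Num.Theory.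

Definition Hrnm (n r m : nat) : {set {set {set 'I_n}}} :=
  [set H : {set {set 'I_n}} | [forall e in H, #|e| == r] && (#|H| == m)].

Definition count_small (n r t a : nat) (H : {set {set 'I_n}}) : nat :=
  #|[set S : {set {set 'I_n}} |
      [&& S \subset H, #|S| == t & #|cover S| <= r * t - a]]|.

(* expectation of count_small for H uniform in H_r(n,m);
   (0 by convention if H_r(n,m) is empty, since 0^-1 = 0 in rat) *)
Definition expected_small (n r m t a : nat) : rat :=
  ((\sum_(H in Hrnm n r m) @count_small n r t a H)%:R / (#|Hrnm n r m|)%:R)%R.

From HB Require Import structures.
From mathcomp Require Import all_boot all_order all_algebra.
From mathcomp Require Import zify ring lra.
Import Order.TTheory GRing.Theory Num.Theory.

(* Let M = C(n, r) be the number of r-subsets of [n] and let D be the set of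
   t-families of r-sets whose union has at most r t - a vertices.  Each S in D lies
   in C(M - t, m - t) of the C(M, m) hypergraphs of H_r(n, m), and
   C(M - t, m - t) / C(M, m) <= (m / M)^t, so the expectation E is at most
   |D| (m / M)^t.  To count D, give a family S the weight lam^(r t - |cover S|)
   for some lam >= 1; each member of D has weight at least lam^a.  Adding the
   edges one at a time, the total weight is at most G^t, where G bounds
   g(U) = sum over r-sets e of lam^|e meet U| for all vertex sets U with
   |U| <= r (t - 1).  Grouping the r-sets e by s = |e meet U| gives
   g(U) <= M / (1 - y) with y = lam |U| r / (n - r).  The choice
   lam = n / (r^2 t) makes g(U) <= 2t M as soon as 2 (t + 1) r^2 <= n, whence
   E <= (2t + 1)^t t^a r^(2a) m^t / n^a.  Since t is bounded and r^2 = o(n),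
   this gives the theorem. *)

Lemma bin_le_expn u s : 'C(u, s) <= u ^ s.
Proof.
elim: s => [|s IH]; first by rewrite bin0 expn0.
have step : s.+1 * 'C(u, s.+1) <= u * u ^ s.
  by rewrite mul_bin_left; apply: leq_mul; [exact: leq_subr | exact: IH].
by rewrite expnS; apply: leq_trans step; rewrite mulSn leq_addr.
Qed.

Lemma bin_shift_down n r s : s <= r -> r <= n ->
  'C(n, r - s) * (n - r) ^ s <= 'C(n, r) * r ^ s.
Proof.
move=> + rn; elim: s => [|s IH] sr; first by rewrite subn0 !expn0.
set k := r - s.+1.
have Ck : r - s = k.+1 by rewrite /k; lia.
have IHk := IH (ltnW sr); rewrite Ck in IHk.
have ratio : 'C(n, k) * (n - r) <= r * 'C(n, k.+1).
  apply: (@leq_trans ('C(n, k) * (n - k))); first by apply: leq_mul => //; lia.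
  by rewrite mulnC -mul_bin_left; apply: leq_mul => //; lia.
rewrite !expnS; apply: (@leq_trans (r * 'C(n, k.+1) * (n - r) ^ s)).
  by rewrite mulnA; exact: leq_mul.
by rewrite -mulnA [X in _ <= X]mulnCA; apply: leq_mul.
Qed.

Lemma bin_ratio_le m M t : m <= M -> 'C(m, t) * M ^ t <= 'C(M, t) * m ^ t.
Proof.
move=> mM; elim: t => [|t IH]; first by rewrite !bin0.
suff : t.+1 * ('C(m, t.+1) * M ^ t.+1) <= t.+1 * ('C(M, t.+1) * m ^ t.+1).
  by rewrite leq_mul2l.
rewrite !mulnA !mul_bin_left !expnS.
have factor : (m - t) * M <= (M - t) * m.
  by rewrite !mulnBl mulnC; apply: leq_sub2l; exact: leq_mul.
by apply: (leq_trans (eq_leq _) (leq_trans (leq_mul factor IH) (eq_leq _))); ring.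
Qed.

(* Choosing an m-set and a t-subset of it, or the t-set first and then the rest. *)
Lemma bin_subset_of_subset M m t : t <= m -> m <= M ->
  'C(M, m) * 'C(m, t) = 'C(M, t) * 'C(M - t, m - t).
Proof.
move=> tm mM.
have fact_pos : 0 < t`! * (m - t)`! * (M - m)`! by rewrite !muln_gt0 !fact_gt0.
apply/eqP; rewrite -(eqn_pmul2r fact_pos); apply/eqP.
have Cmt := bin_fact tm; have CMm := bin_fact mM; have CMt : t <= M by lia.
have CMtmt : m - t <= M - t by lia.
move: (bin_fact CMtmt) (bin_fact CMt); have -> : M - t - (m - t) = M - m by lia.
move=> CR CL.
transitivity ('C(M, m) * (('C(m, t) * (t`! * (m - t)`!)) * (M - m)`!)); first ring.
by rewrite Cmt CMm -CL -CR; ring.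
Qed.

Lemma bin_extension_le M m t : t <= m -> m <= M ->
  'C(M - t, m - t) * M ^ t <= 'C(M, m) * m ^ t.
Proof.
move=> tm mM.
have CMt_pos : 0 < 'C(M, t) by rewrite bin_gt0; lia.
rewrite -(leq_pmul2l CMt_pos) mulnA -bin_subset_of_subset // -mulnA [X in _ <= X]mulnCA.
by apply: leq_mul => //; exact: bin_ratio_le.
Qed.

Local Open Scope ring_scope.

Lemma sum_subset_le (R : numDomainType) (T : finType) (A B : {set T}) (F : T -> R) :
  A \subset B -> (forall x, x \in B -> 0 <= F x) ->
  \sum_(x in A) F x <= \sum_(x in B) F x.
Proof.
move=> AB F0; rewrite [X in _ <= X](big_setID A) /= (setIidPr AB) lerDl.
by apply: sumr_ge0 => x; rewrite inE => /andP[_ /F0].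
Qed.

Lemma geometric_sum_le (R : realFieldType) (y : R) N : 0 <= y -> y < 1 ->
  \sum_(s < N) y ^+ s <= (1 - y)^-1.
Proof.
move=> y0 y1.
have telescope : (\sum_(s < N) y ^+ s) * (1 - y) = 1 - y ^+ N.
  elim: N => [|N IH]; first by rewrite big_ord0 mul0r expr0 subrr.
  by rewrite big_ord_recr /= mulrDl IH exprS; ring.
by rewrite -div1r ler_pdivlMr ?subr_gt0 // telescope lerBlDr lerDl exprn_ge0.
Qed.

Lemma bin_extension_ratio M m t : (t <= m)%N -> (m <= M)%N -> (0 < M)%N ->
  'C(M - t, m - t)%:R / 'C(M, m)%:R <= (m%:R / M%:R) ^+ t :> rat.
Proof.
move=> tm mM M_pos.
have CMm_pos : 0 < 'C(M, m)%:R :> rat by rewrite ltr0n bin_gt0.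
have Mt_pos : 0 < M%:R ^+ t :> rat by rewrite exprn_gt0 // ltr0n.
rewrite expr_div_n ler_pdivrMr // mulrAC ler_pdivlMr // -!natrX -!natrM ler_nat.
by rewrite [X in (_ <= X)%N]mulnC bin_extension_le.
Qed.

Section RSets.

Variables n r : nat.

Definition rsets : {set {set 'I_n}} := [set e : {set 'I_n} | #|e| == r].

Lemma card_rsets : #|rsets| = 'C(n, r).
Proof. by rewrite card_draws card_ord. Qed.

Lemma card_cover_rsets (S : {set {set 'I_n}}) :
  S \subset rsets -> (#|cover S| <= r * #|S|)%N.
Proof.
move=> SK; apply: leq_trans (leq_card_cover S).1 _.
rewrite (eq_bigr (fun _ => r)); first by rewrite sum_nat_const mulnC.
by move=> A /(subsetP SK); rewrite inE => /eqP.
Qed.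

(* An r-set meeting U in exactly s points is a choice of s points of U and
   r - s points of [n]; so there are at most C(|U|, s) C(n, r - s) of them. *)
Lemma card_rsets_meeting (U : {set 'I_n}) s :
  (#|[set e in rsets | #|e :&: U| == s]| <= (s <= r) * ('C(#|U|, s) * 'C(n, r - s)))%N.
Proof.
case: (leqP s r) => sr; last first.
  rewrite mul0n leqn0 cards_eq0; apply/eqP/setP => e; rewrite !inE.
  apply/negbTE/negP => /andP[/eqP ce /eqP cs].
  have : (#|e :&: U| <= #|e|)%N by apply/subset_leq_card/subsetIl.
  lia.
rewrite mul1n.
set A := [set e in rsets | #|e :&: U| == s].
pose split_at_U := fun e : {set 'I_n} => (e :&: U, e :\: U).
have split_inj : {in A &, injective split_at_U}.
  by move=> e1 e2 _ _ [h1 h2]; rewrite -(setID e1 U) -(setID e2 U) h1 h2.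
rewrite -(card_in_imset split_inj).
apply: (@leq_trans #|setX [set X : {set 'I_n} | (X \subset U) && (#|X| == s)]
                           [set Y : {set 'I_n} | #|Y| == (r - s)%N]|).
  apply/subset_leq_card/subsetP => p /imsetP[e].
  rewrite !inE => /andP[/eqP ce /eqP cs] ->.
  by rewrite subsetIr cs eqxx /= cardsD ce cs.
by rewrite cardsX cards_draws card_draws card_ord.
Qed.

Variable lam : rat.
Hypothesis lam_ge0 : 0 <= lam.

(* The weight g(U) = sum over r-sets e of lam^|e meet U|; it controls the cost of
   adding one edge to a partial configuration covering U. *)
Definition meet_sum (U : {set 'I_n}) : rat := \sum_(e in rsets) lam ^+ #|e :&: U|.

Lemma meeting_term_le u s : (r < n)%N ->
  lam ^+ s * ((s <= r) * ('C(u, s) * 'C(n, r - s)))%:R <=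
  'C(n, r)%:R * (lam * u%:R * r%:R / (n - r)%:R) ^+ s.
Proof.
move=> rn.
have D_pos : 0 < ((n - r) ^ s)%:R :> rat by rewrite ltr0n expn_gt0 subn_gt0 rn.
case: (leqP s r) => sr; last first.
  by rewrite mul0n mulr0 mulr_ge0 ?ler0n // exprn_ge0 // divr_ge0 ?mulr_ge0 ?ler0n.
rewrite mul1n.
have Cu_le : ('C(u, s))%:R <= (u ^ s)%:R :> rat by rewrite ler_nat bin_le_expn.
have Cn_le : ('C(n, r - s) * (n - r) ^ s)%:R <= ('C(n, r) * r ^ s)%:R :> rat.
  by rewrite ler_nat bin_shift_down // ltnW.
rewrite !natrM in Cn_le *; rewrite !natrX in Cu_le Cn_le D_pos.
rewrite expr_div_n !exprMn.
set L := lam ^+ s; set X := u%:R ^+ s; set R := r%:R ^+ s; set D := (n - r)%:R ^+ s.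
set Cu := 'C(u, s)%:R; set Cn := 'C(n, r - s)%:R; set M := 'C(n, r)%:R.
have L0 : 0 <= L by rewrite exprn_ge0.
have -> : M * (L * X * R / D) = L * (X * (M * R)) / D by field; rewrite gt_eqF.
rewrite ler_pdivlMr // -!mulrA ler_wpM2l //.
by apply: ler_pM => //; rewrite mulr_ge0 ?ler0n // ltW.
Qed.

Lemma meet_sum_le (U : {set 'I_n}) : (r < n)%N ->
  lam * #|U|%:R * r%:R / (n - r)%:R < 1 ->
  meet_sum U <= 'C(n, r)%:R * (1 - lam * #|U|%:R * r%:R / (n - r)%:R)^-1.
Proof.
move=> rn; set y := lam * _ * _ / _ => y_lt1.
have y_ge0 : 0 <= y by rewrite divr_ge0 ?mulr_ge0 ?ler0n.
have by_slice (e : {set 'I_n}) :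
    lam ^+ #|e :&: U| = \sum_(s < n.+1) (#|e :&: U| == s)%:R * lam ^+ s.
  have small : (#|e :&: U| < n.+1)%N.
    by rewrite ltnS; apply: leq_trans (max_card _) _; rewrite card_ord.
  rewrite (bigD1 (Ordinal small)) //= eqxx mul1r big1 ?addr0 // => s s_ne.
  suff -> : (#|e :&: U| == s) = false by rewrite mul0r.
  by apply/negbTE; apply: contra s_ne => /eqP h; apply/eqP/val_inj.
rewrite /meet_sum (eq_bigr _ (fun e _ => by_slice e)) exchange_big /=.
apply: (@le_trans _ _ (\sum_(s < n.+1) 'C(n, r)%:R * y ^+ s)); last first.
  by rewrite -mulr_sumr ler_wpM2l ?ler0n ?geometric_sum_le.
apply: ler_sum => s _; rewrite -mulr_suml.
have -> : \sum_(e in rsets) (#|e :&: U| == s)%:R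
          = #|[set e in rsets | #|e :&: U| == s]|%:R :> rat.
  rewrite -natr_sum; congr (_%:R).
  rewrite -sum1_card [in RHS]big_mkcond [in LHS]big_mkcond /=.
  by apply: eq_bigr => e _; rewrite !inE; case: (e \in rsets); case: (_ == _).
apply: le_trans (meeting_term_le #|U| s rn); rewrite mulrC ler_wpM2l ?exprn_ge0 //.
by rewrite ler_nat card_rsets_meeting.
Qed.

End RSets.

Section ExcessWeight.

Variables (n r : nat) (lam : rat).
Hypothesis lam_ge0 : 0 <= lam.

Definition rfamilies (j : nat) : {set {set {set 'I_n}}} :=
  [set S : {set {set 'I_n}} | (S \subset rsets n r) && (#|S| == j)].

(* lam raised to the number of vertices saved by overlaps when the j edges of S
   are added to the vertex set U. *)
Definition excess_weight (U : {set 'I_n}) (j : nat) (S : {set {set 'I_n}}) : rat :=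
  lam ^+ (#|U| + r * j - #|U :|: cover S|)%N.

Lemma excess_weight_ge0 U j S : 0 <= excess_weight U j S.
Proof. exact: exprn_ge0. Qed.

Lemma rfamilies0 : rfamilies 0 = [set set0].
Proof.
apply/setP => S; rewrite !inE cards_eq0.
by apply/andP/eqP => [[_ /eqP] //|->]; rewrite sub0set.
Qed.

Lemma excess_weight_peel U j S e :
  S \in rfamilies j.+1 -> e \in S ->
  excess_weight U j.+1 S = lam ^+ #|e :&: U| * excess_weight (U :|: e) j (S :\ e).
Proof.
rewrite inE => /andP[SK /eqP cS] eS.
move: (subsetP SK e eS); rewrite inE => /eqP ce.
have S'K : S :\ e \subset rsets n r by apply: subset_trans SK; apply: subsetDl.
have cS' : #|S :\ e| = j by move: cS; rewrite (cardsD1 e) eS add1n => -[].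
have cover_le := @card_cover_rsets n r _ S'K; rewrite cS' in cover_le.
have cover_peel : cover S = e :|: cover (S :\ e).
  by rewrite -{1}(setD1K eS) /cover bigcup_setU big_set1.
rewrite /excess_weight -exprD cover_peel setUA; congr (_ ^+ _).
set C := cover (S :\ e) in cover_le *.
have := cardsUI U e; rewrite [e :&: U]setIC.
have := (leq_card_setU (U :|: e) C).1.
have : (#|U :|: e| <= #|U :|: e :|: C|)%N by apply/subset_leq_card/subsetUl.
lia.
Qed.

(* Removing a fixed edge e maps the (j+1)-families containing e injectively
   into the j-families. *)
Lemma sum_peel_le j e (F : {set {set 'I_n}} -> rat) : (forall S, 0 <= F S) ->
  \sum_(S | (S \in rfamilies j.+1) && (e \in S)) F (S :\ e)
    <= \sum_(S in rfamilies j) F S.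
Proof.
move=> F_ge0.
have -> : \sum_(S | (S \in rfamilies j.+1) && (e \in S)) F (S :\ e)
    = \sum_(S in [set S in rfamilies j.+1 | e \in S]) F (S :\ e).
  by apply: eq_bigl => S; rewrite !inE.
rewrite -(big_imset F) /=; last first.
  move=> S1 S2; rewrite !inE => /andP[_ e1] /andP[_ e2] h.
  by rewrite -(setD1K e1) -(setD1K e2) h.
apply: sum_subset_le => [|S' _]; last exact: F_ge0.
apply/subsetP => S' /imsetP[S]; rewrite !inE => /andP[/andP[SK /eqP cS] eS] ->.
rewrite (subset_trans _ SK) ?subsetDl //=.
by move: cS; rewrite (cardsD1 e) eS add1n => -[->].
Qed.

(* Induction on j: count each family once per edge, peel that edge off. *)
Lemma total_excess_weight_le t (G : rat) :
  (forall U : {set 'I_n}, (#|U| + r <= r * t)%N -> meet_sum n r lam U <= G) ->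
  forall j (U : {set 'I_n}), (#|U| + r * j <= r * t)%N ->
  \sum_(S in rfamilies j) excess_weight U j S <= G ^+ j.
Proof.
move=> meet_le; elim=> [|j IH] U hU.
  by rewrite rfamilies0 big_set1 /excess_weight /cover big_set0 setU0 muln0 addn0 subnn.
have hU' : (#|U| + r <= r * t)%N by move: hU; rewrite mulnS; lia.
have G_ge0 : 0 <= G.
  by apply: le_trans (meet_le U hU'); apply: sumr_ge0 => e _; rewrite exprn_ge0.
apply: (@le_trans _ _ (\sum_(S in rfamilies j.+1) \sum_(e in S) excess_weight U j.+1 S)).
  (* each (j+1)-family is counted j+1 >= 1 times, once for each of its edges *)
  apply: ler_sum => S SD; rewrite sumr_const.
  move: (SD); rewrite inE => /andP[_ /eqP ->].
  by rewrite mulrS lerDl mulrn_wge0 // excess_weight_ge0.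
rewrite (exchange_big_dep (fun e => e \in rsets n r)) /=; last first.
  by move=> S e; rewrite inE => /andP[SK _] eS; apply: (subsetP SK).
apply: (@le_trans _ _ (\sum_(e in rsets n r) lam ^+ #|e :&: U| * G ^+ j)).
  (* for a fixed edge e, the remaining j-families have total weight <= G^j *)
  apply: ler_sum => e eK.
  rewrite (eq_bigr (fun S => lam ^+ #|e :&: U| * excess_weight (U :|: e) j (S :\ e)));
    last by move=> S /andP[SD eS]; apply: excess_weight_peel.
  rewrite -mulr_sumr ler_wpM2l ?exprn_ge0 //.
  apply: le_trans (sum_peel_le j e _ (excess_weight_ge0 _ _)) (IH _ _).
  move: (eK) hU; rewrite inE mulnS => /eqP ce.
  have := leq_card_setU U e; rewrite ce => -[]; lia.
rewrite -mulr_suml exprS; apply: ler_pM (meet_le U hU') (lexx _); last exact: exprn_ge0.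
by apply: sumr_ge0 => e _; rewrite exprn_ge0.
Qed.

End ExcessWeight.

Section FirstMoment.

Variables n r m t a : nat.

Definition small_families : {set {set {set 'I_n}}} :=
  [set S in rfamilies n r t | (#|cover S| <= r * t - a)%N].

Lemma Hrnm_rfamilies : Hrnm n r m = rfamilies n r m.
Proof.
apply/setP => H; rewrite !inE; congr (_ && _).
apply/forallP/subsetP => [h e eH|h e]; first by rewrite inE; exact: (implyP (h e)).
by apply/implyP => /h; rewrite inE.
Qed.

Lemma card_Hrnm : #|Hrnm n r m| = 'C('C(n, r), m).
Proof. by rewrite Hrnm_rfamilies cards_draws card_rsets. Qed.

Lemma count_small_eq (H : {set {set 'I_n}}) : H \subset rsets n r ->
  @count_small n r t a H = #|[set S in small_families | S \subset H]|.
Proof.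
move=> HK; apply: eq_card => S; rewrite !inE.
by case SH: (S \subset H); rewrite ?andbF //= (subset_trans SH HK) andbT.
Qed.

(* A fixed t-family of r-sets extends to at most C(C(n, r) - t, m - t) hypergraphs
   in H_r(n, m): remove it and what remains is an (m - t)-family of other r-sets. *)
Lemma card_extensions_le (S : {set {set 'I_n}}) : S \subset rsets n r -> #|S| = t ->
  (#|[set H in Hrnm n r m | S \subset H]| <= 'C('C(n, r) - t, m - t))%N.
Proof.
move=> SK cS.
have inj : {in [set H in Hrnm n r m | S \subset H] &, injective (fun H => H :\: S)}.
  move=> H1 H2; rewrite !inE => /andP[_ s1] /andP[_ s2] /= h.
  by rewrite -(setID H1 S) -(setID H2 S) (setIidPr s1) (setIidPr s2) h.
rewrite -(card_in_imset inj).
have -> : 'C('C(n, r) - t, m - t) =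
    #|[set B : {set {set 'I_n}} | (B \subset rsets n r :\: S) && (#|B| == (m - t)%N)]|.
  by rewrite cards_draws cardsD (setIidPr SK) card_rsets cS.
apply/subset_leq_card/subsetP => B /imsetP[H]; rewrite Hrnm_rfamilies !inE.
by move=> /andP[/andP[HK /eqP cH] SH] ->; rewrite setSD //= cardsD (setIidPr SH) cH cS.
Qed.

(* Double counting the pairs (S, H) with S a small family contained in H. *)
Lemma sum_count_small_le :
  (\sum_(H in Hrnm n r m) @count_small n r t a H
     <= #|small_families| * 'C('C(n, r) - t, m - t))%N.
Proof.
have card_sum (T : finType) (A : {set T}) (P : pred T) :
    #|[set x in A | P x]| = (\sum_(x in A) P x)%N.
  rewrite -sum1_card [in LHS]big_mkcond [in RHS]big_mkcond /=.
  by apply: eq_bigr => x _; rewrite !inE; case: (x \in A); case: (P x).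
rewrite (eq_bigr (fun H : {set {set 'I_n}} => \sum_(S in small_families) (S \subset H))%N); last first.
  move=> H; rewrite Hrnm_rfamilies inE => /andP[HK _].
  by rewrite count_small_eq // card_sum.
rewrite exchange_big /= -sum_nat_const; apply: leq_sum => S.
rewrite !inE => /andP[/andP[SK /eqP cS] _]; rewrite -card_sum.
exact: card_extensions_le.
Qed.

Lemma expected_small_le_card : (r <= n)%N ->
  expected_small n r m t a <= #|small_families|%:R * (m%:R / 'C(n, r)%:R) ^+ t.
Proof.
move=> rn; set M := 'C(n, r).
have bound_ge0 : 0 <= #|small_families|%:R * (m%:R / M%:R) ^+ t :> rat.
  by rewrite mulr_ge0 ?exprn_ge0 ?divr_ge0 ?ler0n.
rewrite /expected_small card_Hrnm -/M.
have [mt|tm] := ltnP m t.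
  rewrite big1 ?mul0r // => H; rewrite Hrnm_rfamilies inE => /andP[HK /eqP cH].
  apply/eqP; rewrite cards_eq0; apply/eqP/setP => S; rewrite !inE.
  apply/negbTE/negP => /and3P[SH /eqP cS _].
  by have := subset_leq_card SH; rewrite cS cH; lia.
have [Mm|mM] := ltnP M m; first by rewrite bin_small // invr0 mulr0.
apply: (@le_trans _ _ ((#|small_families| * 'C(M - t, m - t))%:R / 'C(M, m)%:R)).
  by rewrite ler_wpM2r ?invr_ge0 ?ler0n // ler_nat sum_count_small_le.
rewrite natrM -mulrA ler_wpM2l ?ler0n // bin_extension_ratio //.
by rewrite bin_gt0.
Qed.

(* Counting small families with the excess weight: each has weight at least lam^a. *)
Lemma card_small_families_le (lam G : rat) : 1 <= lam -> (a <= r * t)%N ->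
  (forall U : {set 'I_n}, (#|U| + r <= r * t)%N -> meet_sum n r lam U <= G) ->
  #|small_families|%:R * lam ^+ a <= G ^+ t.
Proof.
move=> lam_ge1 ar meet_le; have lam_ge0 : 0 <= lam := le_trans ler01 lam_ge1.
have start : (#|(set0 : {set 'I_n})| + r * t <= r * t)%N by rewrite cards0.
apply: le_trans (@total_excess_weight_le n r lam lam_ge0 t G meet_le t set0 start).
rewrite mulr_natl -sumr_const.
apply: (@le_trans _ _ (\sum_(S in small_families) excess_weight n r lam set0 t S)).
  apply: ler_sum => S; rewrite inE => /andP[_ small].
  by rewrite /excess_weight cards0 add0n set0U ler_weXn2l //; lia.
apply: sum_subset_le => [|S _]; last exact: excess_weight_ge0.
by apply/subsetP => S; rewrite inE => /andP[].
Qed.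

End FirstMoment.

Lemma expected_small_le_weighted n r m t a (lam c : rat) :
  1 <= lam -> (r <= n)%N -> (a <= r * t)%N ->
  (forall U : {set 'I_n}, (#|U| + r <= r * t)%N -> meet_sum n r lam U <= c * 'C(n, r)%:R) ->
  expected_small n r m t a <= c ^+ t * m%:R ^+ t / lam ^+ a.
Proof.
move=> lam_ge1 rn ar meet_le.
have lamX_pos : 0 < lam ^+ a by rewrite exprn_gt0 // (lt_le_trans ltr01 lam_ge1).
have M_neq0 : 'C(n, r)%:R != 0 :> rat by rewrite pnatr_eq0 -lt0n bin_gt0.
apply: le_trans (@expected_small_le_card n r m t a rn) _.
rewrite ler_pdivlMr // mulrAC.
have ratio_ge0 : 0 <= (m%:R / 'C(n, r)%:R) ^+ t :> rat by rewrite exprn_ge0 // divr_ge0 ?ler0n.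
apply: le_trans (ler_wpM2r ratio_ge0 (@card_small_families_le n r t a lam _ lam_ge1 ar meet_le)) _.
by rewrite -!exprMn mulrAC -mulrA divfK.
Qed.

(* With lam = n / (r^2 t) and 2 (t + 1) r^2 <= n, every U with |U| + r <= r t has
   y = lam |U| r / (n - r) <= 1 - 1/(2t), hence g(U) <= 2t C(n, r). *)
Lemma meet_sum_le_choice n r t (U : {set 'I_n}) :
  (0 < t)%N -> (0 < r)%N -> ((2 * t + 2) * r ^ 2 <= n)%N -> (#|U| + r <= r * t)%N ->
  meet_sum n r (n%:R / (r ^ 2 * t)%:R) U <= (2 * t + 1)%:R * 'C(n, r)%:R.
Proof.
move=> t_pos r_pos n_large hU; set lam := n%:R / _; set u := #|U| in hU *.
have rn : (r < n)%N by nia.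
have lam_ge0 : 0 <= lam by rewrite divr_ge0 ?ler0n.
pose y := lam * u%:R * r%:R / (n - r)%:R.
have rd_pos : 0 < (r * (n - r))%:R :> rat by rewrite ltr0n muln_gt0 r_pos subn_gt0.
have y_bound : y * (2 * t)%:R + 1 <= (2 * t)%:R.
  have -> : y * (2 * t)%:R = (2 * n * u)%:R / (r * (n - r))%:R.
    rewrite /y /lam !natrM ?natrX; field.
    by apply/and3P; split; rewrite pnatr_eq0 -lt0n ?subn_gt0 //; lia.
  rewrite -(ler_pM2r rd_pos) mulrDl divfK ?mul1r ?gt_eqF //.
  rewrite -!natrM -natrD ler_nat mulnA.
  have : (u <= r * (t - 1))%N by rewrite mulnBr muln1; lia.
  have : (2 * t * r <= n + r)%N by nia.
  nia.
have tt_pos : 0 < (2 * t)%:R :> rat by rewrite ltr0n; lia.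
have y_lt1 : y < 1.
  by rewrite -(ltr_pM2r tt_pos) mul1r; lra.
apply: le_trans (@meet_sum_le n r lam lam_ge0 U rn y_lt1) _.
rewrite mulrC ler_wpM2r ?ler0n //.
apply: (@le_trans _ _ (2 * t)%:R); last by rewrite ler_nat; lia.
by rewrite -div1r ler_pdivrMr ?subr_gt0 // -/u -/y; nra.
Qed.

Lemma expected_small_le_fixed n r m t a :
  (0 < r)%N -> (a <= r * t)%N -> ((2 * t + 2) * r ^ 2 <= n)%N ->
  expected_small n r m t a
    <= (2 * t + 1)%:R ^+ t * (t%:R ^+ a * r%:R ^+ (2 * a) * m%:R ^+ t / n%:R ^+ a).
Proof.
move=> r_pos ar n_large; have rn : (r <= n)%N by nia.
have [t0|t_pos] := posnP t.
  have a0 : a = 0%N by move: ar; rewrite t0 muln0; lia.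
  apply: le_trans (@expected_small_le_weighted _ _ _ _ _ 1 1 (lexx 1) rn ar _) _.
    by move=> U; rewrite t0 muln0; lia.
  by rewrite t0 a0 !expr0 !(mul1r, divr1).
have lam_ge1 : 1 <= n%:R / (r ^ 2 * t)%:R :> rat.
  by rewrite ler_pdivlMr ?ltr0n ?muln_gt0 ?expn_gt0 ?r_pos // mul1r ler_nat; nia.
apply: le_trans (@expected_small_le_weighted n r m t a _ _ lam_ge1 rn ar
  (fun U => @meet_sum_le_choice n r t U t_pos r_pos n_large)) _.
rewrite le_eqVlt; apply/orP; left; apply/eqP.
rewrite expr_div_n natrM natrX exprMn -exprM mulnC.
field; apply/andP; split; rewrite ?expf_neq0 // ?pnatr_eq0 -?lt0n //; lia.
Qed.

Local Close Scope ring_scope.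

(* Asymptotically: with t <= T and r^2 <= n / (2T + 2) for large n, the fixed-n
   bound applies and its constant (2t + 1)^t is at most (2T + 1)^T. *)
Theorem lemma2p2 (r m t a : nat -> nat)
  (hr3 : forall n, 3 <= r n)
  (hr_small : forall eps : rat, (0 < eps)%R ->
     exists N, forall n, N <= n -> ((r n ^ 2)%:R <= eps * n%:R)%R)
  (ht : exists T, forall n, t n <= T)
  (ha : forall n, a n <= r n * t n) :
  exists C : rat, (0 < C)%R /\ exists N, forall n, N <= n ->
    (expected_small n (r n) (m n) (t n) (a n)
      <= C * (t n)%:R ^+ a n * (r n)%:R ^+ (2 * a n) * (m n)%:R ^+ t n
           / (n%:R ^+ a n))%R.
Proof.
Local Open Scope ring_scope.
have [T t_le] := ht.
have K_pos : (0 : rat) < (2 * T + 2)%:R by rewrite ltr0n addn2.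
have eps_pos : 0 < (2 * T + 2)%:R^-1 :> rat by rewrite invr_gt0.
have [N r_small] := hr_small _ eps_pos.
exists ((2 * T + 1)%:R ^+ T); split; first by rewrite exprn_gt0 // ltr0n addn1.
exists N => n nN.
have n_large : ((2 * t n + 2) * r n ^ 2 <= n)%N.
  suff : ((2 * T + 2) * r n ^ 2 <= n)%N by have := t_le n; nia.
  by rewrite -(ler_nat rat) natrM -ler_pdivlMl // r_small.
have r_pos : (0 < r n)%N by apply: leq_trans (hr3 n).
apply: le_trans (expected_small_le_fixed n (r n) (m n) (t n) (a n) r_pos (ha n) n_large) _.
rewrite -!mulrA ler_wpM2r ?mulr_ge0 ?invr_ge0 ?exprn_ge0 ?ler0n //.
apply: (@le_trans _ _ ((2 * T + 1)%:R ^+ t n)).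
  by rewrite lerXn2r ?nnegrE ?ler0n // ler_nat leq_add2r leq_mul2l t_le orbT.
by rewrite ler_weXn2l ?t_le // ler1n addn1.
Qed.
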